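(* Fix $s,b\ge1$, let $\{a_i\}$ be the $(s,b)$-Generacci sequence, and let $p_{n,k}$ be the number of $m\in[a_{(n-1)b+1},a_{nb+1})$ whose legal decomposition has exactly $k$ summands (with $a_i=0$ for $i\le 0$). Let $g_n(y)=\sum_{k\ge0}p_{n,k}y^k$, the coefficient of $x^n$ in $\sum_{n,k}p_{n,k}x^ny^k$. Then for $y>0$ and all sufficiently large $n$, \[g_n(y)=\sum_{i=1}^{s+1}q_i(y)\alpha_i^n(y),\] where $\alpha_i(y)=1/\lambda_i(y)$ with $\lambda_1(y),\dots,\lambda_{s+1}(y)$ the distinct roots of $1-x-byx^{s+1}$, and the $q_i(y)$ are algebraic functions of $y$ depending on these roots.
   Context: Fix integers $s,b\ge1$. For an increasing sequence of positive integers $\{a_i\}_{i\ge1}$ define bins $\mathcal{B}_n=\{a_{b(n-1)+1},\dots,a_{bn}\}$ for $n\ge1$, $\mathcal{B}_j=\emptyset$ for $j\le 0$. A decomposition $m=a_{\ell_1}+\dots+a_{\ell_k}$ with $a_{\ell_1}>\dots>a_{\ell_k}$ is an $(s,b)$-Generacci legal decomposition if $\{a_{\ell_i},a_{\ell_{i+1}}\}\not\subset\mathcal{B}_{j-s}\cup\dots\cup\mathcal{B}_j$ for all $i,j$. The $(s,b)$-Generacci sequence is the increasing sequence in which each $a_i$ is the smallest positive integer with no legal decomposition using $a_1,\dots,a_{i-1}$; every nonnegative integer has a unique legal decomposition. *)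

From HB Require Import structures.
From mathcomp Require Import all_boot all_order all_algebra.
From mathcomp Require Import boolp reals.
From mathcomp Require Import complex.
Set Implicit Arguments. Unset Strict Implicit. Unset Printing Implicit Defensive.
Import Order.TTheory GRing.Theory Num.Theory.

(** Index of the bin containing position [i >= 1] (bins of size [b]):
    B_n = {a_{b(n-1)+1}, ..., a_{bn}}, so position i lies in bin ceil(i/b). *)
Definition bin_of (b i : nat) : nat := (i + b - 1) %/ b.

(** Position [i] lies in B_{j-s} ∪ ... ∪ B_j (bins with non-positive index are
    empty; since [bin_of b i >= 1] for [i >= 1], the truncated [j - s] in nat
    gives exactly this). *)
Definition in_window (s b j i : nat) : bool := (j - s <= bin_of b i <= j)%N.

(** [ls] is the list of indices [l_1, ..., l_k] of an (s,b)-Generacci legal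
    decomposition of [m] with respect to the sequence [a] (indexed from 1):
    all indices positive, a_{l_1} > ... > a_{l_k}, no two consecutive summands
    in a common window of s+1 consecutive bins, and m = sum of the a_{l_i}. *)
Definition legal_decomp (s b : nat) (a : nat -> nat) (ls : seq nat) (m : nat)
  : Prop :=
  [/\ all (fun l => 0 < l)%N ls,
      sorted (fun x y => a y < a x)%N ls,
      (forall i j, (i.+1 < size ls)%N ->
          ~~ (in_window s b j (nth 0 ls i) && in_window s b j (nth 0 ls i.+1)))
    & m = \sum_(l <- ls) a l]%N.

(** [a] is the (s,b)-Generacci sequence (terms a_1, a_2, ...; the value a 0
    is irrelevant): increasing, and each a_i is the smallest positive integer
    having no legal decomposition using a_1, ..., a_{i-1}. *)
Definition is_generacci (s b : nat) (a : nat -> nat) : Prop :=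
  (forall i, 0 < i -> a i < a i.+1)%N /\
  forall i, (0 < i)%N ->
    [/\ (0 < a i)%N,
        ~ (exists ls, all (fun l => l < i)%N ls /\ legal_decomp s b a ls (a i))
      & forall m, (0 < m < a i)%N ->
          exists ls, all (fun l => l < i)%N ls /\ legal_decomp s b a ls m].

(** Endpoints of the range [a_{(n-1)b+1}, a_{nb+1}), with a_i = 0 for i <= 0. *)
Definition lo_end (b : nat) (a : nat -> nat) (n : nat) : nat :=
  if n is n'.+1 then a (n' * b).+1 else 0.
Definition hi_end (b : nat) (a : nat -> nat) (n : nat) : nat := a (n * b).+1.

Definition p_nk (s b : nat) (a : nat -> nat) (n k : nat) : nat :=
  (\sum_(lo_end b a n <= m < hi_end b a n)
     `[< exists ls, legal_decomp s b a ls m /\ size ls = k >])%N.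

(** g_n(y) = sum_{k >= 0} p_{n,k} y^k.  Only k < a_{nb+1} can contribute
    (a legal decomposition of m has at most m summands), so the sum is
    truncated there. *)
Definition g_n (R : pzSemiRingType) (s b : nat) (a : nat -> nat) (n : nat) (y : R) : R :=
  (\sum_(0 <= k < hi_end b a n) (p_nk s b a n k)%:R * y ^+ k)%R.

Definition charpoly (R : rcfType) (s b : nat) (y : R) : {poly complex R} :=
  (1 - 'X - ((b%:R * y)%:C)%C%:P * 'X^(s.+1))%R.

From HB Require Import structures.
From mathcomp Require Import all_boot all_order all_algebra.
From mathcomp Require Import boolp reals complex.
From mathcomp Require Import zify ring.
Set Implicit Arguments. Unset Strict Implicit. Unset Printing Implicit Defensive.
Import Order.TTheory GRing.Theory Num.Theory.

(* The numbers below a_{i+1} are exactly the sums of legal decompositions using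
   a_1, ..., a_i, each in a unique way, and a_{i+1} = a_i + a_{k+1} where a_k is the
   largest term allowed after a_i. So [a_i, a_{i+1}) consists of the numbers a_i + m,
   m < a_{k+1}, each with one summand more than m. Summing over the b terms of a bin
   gives g_n(y) = b y G_{n-s-1}(y), with G_j the generating polynomial of all numbers
   below a_{jb+1}, whence g_{n+s+1} = g_{n+s} + b y g_n for n >= 1. The characteristic
   roots of this recurrence are the alpha_i = 1/lambda_i, so when they are distinct a
   Vandermonde system gives g_n = sum_i q_i alpha_i^n.
   For algebraicity, let H = (g_{1+j+k}) and T = (sum_i alpha_i^{1+j+k}), the traces of
   the powers of the companion matrix; both are polynomial in y. Factoring through the
   Vandermonde matrix V gives det(H - Z T) = det(V)^2 prod_i alpha_i (q_i - Z), so every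
   q_i is a root of this bivariate polynomial, which vanishes at no admissible y. *)

Section LegalDecompositions.
Variables (s b : nat) (a : nat -> nat).
Hypotheses (b_gt0 : 0 < b) (gen : is_generacci s b a).

Definition legal_step (x y : nat) : bool := bin_of b y + s < bin_of b x.

Definition legal_seq (L : seq nat) : bool :=
  all (fun l => 0 < l) L && sorted legal_step L.

Definition gsum (L : seq nat) : nat := \sum_(l <- L) a l.

Lemma a_lt_succ i : 0 < i -> a i < a i.+1.
Proof. by case: gen => a_incr _; apply: a_incr. Qed.

Lemma a_lt i j : 0 < i -> i < j -> a i < a j.
Proof.
move=> i_gt0; elim: j => // j IHj; rewrite ltnS leq_eqVlt => /predU1P [<-|lt_ij].
  exact: a_lt_succ.
exact: ltn_trans (IHj lt_ij) (a_lt_succ (leq_trans i_gt0 (ltnW lt_ij))).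
Qed.

Lemma a_le i j : 0 < i -> i <= j -> a i <= a j.
Proof. by move=> i_gt0; rewrite leq_eqVlt => /predU1P [->|/(a_lt i_gt0)/ltnW]. Qed.

Lemma a1 : a 1 = 1.
Proof.
case: gen => _ /(_ 1 isT) [a1_gt0 _ repr_lt_a1].
apply/eqP; rewrite eqn_leq a1_gt0 andbT leqNgt; apply/negP => lt1.
have [[|l L] [/= lt_l [/= gt_l _ _ sumE]]] := repr_lt_a1 1 lt1.
  by rewrite big_nil in sumE.
by case/andP: lt_l; case/andP: gt_l; lia.
Qed.

Lemma index_le_a i : i <= a i.
Proof.
elim: i => // -[_|i IHi]; first by rewrite a1.
exact: leq_ltn_trans IHi (a_lt_succ _).
Qed.

Lemma bin_of_le x y : x <= y -> bin_of b x <= bin_of b y.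
Proof. by move=> le_xy; apply: leq_div2r; rewrite leq_sub2r // leq_add2r. Qed.

Lemma legal_step_lt x y : legal_step x y -> y < x.
Proof. by rewrite /legal_step => step; rewrite ltnNge; apply/negP => /bin_of_le; lia. Qed.

Lemma legal_step_trans : transitive legal_step.
Proof. by move=> y x z; rewrite /legal_step; lia. Qed.

Lemma legal_decompE L m : legal_decomp s b a L m <-> legal_seq L /\ m = gsum L.
Proof.
rewrite /legal_decomp /legal_seq /gsum; split.
  case=> L_gt0 /(sortedP 0) a_decr windows ->; split=> //; rewrite L_gt0 /=.
  apply/(sortedP 0) => i lt_i.
  have Li_gt0 : 0 < nth 0 L i by apply: (all_nthP 0 L_gt0); lia.
  have Li1_gt0 : 0 < nth 0 L i.+1 by apply: (all_nthP 0 L_gt0).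
  have lt_next : nth 0 L i.+1 < nth 0 L i.
    by rewrite ltnNge; apply/negP => /(a_le Li_gt0); have := a_decr i lt_i; lia.
  have := bin_of_le (ltnW lt_next); have := windows i (bin_of b (nth 0 L i)) lt_i.
  by rewrite /in_window /legal_step; lia.
case=> /andP [L_gt0 /(sortedP 0) steps] ->; split=> //.
  apply/(sortedP 0) => i lt_i.
  exact: a_lt (all_nthP 0 L_gt0 _ lt_i) (legal_step_lt (steps i lt_i)).
by move=> i j lt_i; have := steps i lt_i; rewrite /in_window /legal_step; lia.
Qed.

Lemma legal_seq_cons x L :
  legal_seq (x :: L) = [&& 0 < x, legal_seq L & all (legal_step x) L].
Proof.
rewrite /legal_seq /= path_sortedE; last exact: legal_step_trans.
by rewrite -!andbA; do 2!congr (_ && _); rewrite andbC.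
Qed.

Lemma legal_seq_gt0 L : legal_seq L -> all (fun l => 0 < l) L.
Proof. by case/andP. Qed.

(* The last index of the bin B_{j-s-1}, where B_j is the bin of [i]. *)
Definition follow_bound (i : nat) : nat := (bin_of b i - s.+1) * b.

Lemma bin_of_leqE l J : 0 < l -> (bin_of b l <= J) = (l <= J * b).
Proof.
move=> l_gt0; rewrite /bin_of -ltnS ltn_divLR // mulSn.
by move: (J * b) => t; apply/idP/idP; lia.
Qed.

Lemma bin_of_gt0 i : 0 < i -> 0 < bin_of b i.
Proof. by move=> i_gt0; rewrite /bin_of divn_gt0 //; lia. Qed.

Lemma bin_of_in_bin n r : 0 < n -> 0 < r <= b -> bin_of b (n.-1 * b + r) = n.
Proof.
move=> n_gt0 r_bin; rewrite /bin_of.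
have -> : n.-1 * b + r + b - 1 = n * b + r.-1.
  by rewrite -[n in _ = n * b + _](prednK n_gt0) mulSn; lia.
by rewrite divnMDl // divn_small ?addn0 //; lia.
Qed.

Lemma legal_stepE i l : 0 < l -> legal_step i l = (l <= follow_bound i).
Proof.
move=> l_gt0; rewrite /follow_bound -bin_of_leqE // /legal_step.
by move: (bin_of_gt0 l_gt0); move: (bin_of b l) (bin_of b i) => x y; lia.
Qed.

Lemma follow_bound_lt i : 0 < i -> follow_bound i < i.
Proof.
move=> i_gt0; rewrite ltnNge /follow_bound -bin_of_leqE //.
by move: (bin_of_gt0 i_gt0); move: (bin_of b i) => x; lia.
Qed.

Definition legal_upto (i : nat) : pred (seq nat) :=
  [pred L | legal_seq L && all (leq^~ i) L].

Lemma legal_upto_cons i L :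
  0 < i -> L \in legal_upto (follow_bound i) -> i :: L \in legal_upto i.
Proof.
move=> i_gt0 /andP [legal_L L_le]; rewrite inE legal_seq_cons i_gt0 legal_L /= leqnn.
apply/andP; split; apply/allP => l lL; have /allP/(_ l lL) := L_le.
  by rewrite -legal_stepE //; apply: (allP (legal_seq_gt0 legal_L)).
by move/leq_trans; apply; exact/ltnW/follow_bound_lt.
Qed.

Lemma legal_upto_case i L : 0 < i -> L \in legal_upto i ->
  L \in legal_upto i.-1 \/ exists2 L', L = i :: L' & L' \in legal_upto (follow_bound i).
Proof.
move=> i_gt0; case: L => [|x L]; first by left.
rewrite inE legal_seq_cons => /andP [/and3P [x_gt0 legal_L steps] /= /andP [le_xi L_le]].
case: (ltngtP x i) => [lt_xi|lt_ix|<-]; [left | lia | right; exists L => //].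
  rewrite inE legal_seq_cons x_gt0 legal_L steps /=; apply/andP; split; first by lia.
  by apply/allP => l /(allP steps)/legal_step_lt; lia.
rewrite inE legal_L /=; apply/allP => l lL.
by rewrite -legal_stepE ?(allP steps) // (allP (legal_seq_gt0 legal_L)).
Qed.

Definition representable (i m : nat) : Prop := exists2 L, L \in legal_upto i & gsum L = m.

Definition zeckendorf_upto (i : nat) : Prop :=
  (forall m, m < a i.+1 <-> representable i m) /\ {in legal_upto i &, injective gsum}.

Lemma zeckendorf_upto0 : zeckendorf_upto 0.
Proof.
have nil_only L : L \in legal_upto 0 -> L = [::].
  by case: L => // x L; rewrite inE legal_seq_cons /= => /andP [/and3P [+ _ _] /andP [+ _]]; lia.
split=> [m|L1 L2 /nil_only -> /nil_only -> //].
rewrite a1 ltnS leqn0; split=> [/eqP ->|[L /nil_only -> <-]]; last by rewrite /gsum big_nil.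
by exists [::]; rewrite /gsum ?big_nil.
Qed.

Lemma representable_gen i m : representable i m <->
  exists ls, all (fun l => l < i.+1) ls /\ legal_decomp s b a ls m.
Proof.
split=> [[L /andP [legal_L L_le] <-]|[L [L_lt /legal_decompE [legal_L ->]]]].
  by exists L; split; [apply: sub_all L_le => l | exact/legal_decompE].
by exists L; rewrite // inE legal_L.
Qed.

Section Step.
Variable i : nat.
Hypotheses (i_gt0 : 0 < i) (zeck_pred : zeckendorf_upto i.-1)
  (zeck_bound : zeckendorf_upto (follow_bound i)).

Lemma representableE m : representable i m <-> m < a i + a (follow_bound i).+1.
Proof.
have succ_pred : i.-1.+1 = i by lia.
have [lt_pred _] := zeck_pred; have [lt_bound _] := zeck_bound; split.
  case=> L /(legal_upto_case i_gt0) [L_pred <-|[L' -> L'_bound <-]].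
    by have := proj2 (lt_pred _) (ex_intro2 _ _ L L_pred erefl); rewrite succ_pred; lia.
  by rewrite /gsum big_cons ltn_add2l; apply/lt_bound; exists L'.
move=> lt_m; case: (ltnP m (a i)) => [lt_mi|le_im].
  have [L /andP [legal_L L_le] <-] : representable i.-1 m by apply/lt_pred; rewrite succ_pred.
  by exists L; rewrite // inE legal_L; apply: sub_all L_le => l /leq_trans; apply; exact: leq_pred.
have [L L_bound sumL] : representable (follow_bound i) (m - a i) by apply/lt_bound; lia.
by exists (i :: L); [exact: legal_upto_cons | rewrite /gsum big_cons -/(gsum L) sumL; lia].
Qed.

Lemma a_succ_step : a i.+1 = a i + a (follow_bound i).+1.
Proof.
case: gen => _ /(_ i.+1 isT) [_ not_repr_a repr_lt_a].
apply/eqP; rewrite eqn_leq; apply/andP; split; rewrite leqNgt; apply/negP.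
  move=> lt_sum; have : representable i (a i + a (follow_bound i).+1).
    by apply/representable_gen/repr_lt_a; have := index_le_a i; lia.
  by move/representableE; rewrite ltnn.
by move/representableE/representable_gen.
Qed.

Lemma zeckendorf_upto_step : zeckendorf_upto i.
Proof.
have succ_pred : i.-1.+1 = i by lia.
have [lt_pred inj_pred] := zeck_pred; have [_ inj_bound] := zeck_bound.
split=> [m|L1 L2]; first by rewrite a_succ_step representableE.
have gsum_lt L : L \in legal_upto i.-1 -> gsum L < a i.
  by move=> L_pred; rewrite -succ_pred; apply/lt_pred; exists L.
move=> /(legal_upto_case i_gt0) [L1_pred|[L1' -> L1'_bound]].
  move=> /(legal_upto_case i_gt0) [L2_pred|[L2' -> _]]; first exact: inj_pred.
  by have := gsum_lt _ L1_pred; rewrite /gsum big_cons => /[swap] ->; lia.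
move=> /(legal_upto_case i_gt0) [L2_pred|[L2' -> L2'_bound]].
  by have := gsum_lt _ L2_pred; rewrite /gsum big_cons => /[swap] <-; lia.
by rewrite /gsum !big_cons => /addnI sumE; rewrite (inj_bound L1' L2').
Qed.

End Step.

Lemma zeckendorf i : zeckendorf_upto i.
Proof.
elim/ltn_ind: i => -[_|i IHi]; first exact: zeckendorf_upto0.
by apply: zeckendorf_upto_step => //; apply: IHi => //; exact: follow_bound_lt.
Qed.

Lemma a_succ i : 0 < i -> a i.+1 = a i + a (follow_bound i).+1.
Proof. by move=> i_gt0; exact: a_succ_step i_gt0 (zeckendorf _) (zeckendorf _). Qed.

Lemma gsum_ge_indices L : legal_seq L -> L \in legal_upto (gsum L).
Proof.
move=> legal_L; rewrite inE legal_L; apply/allP => l lL.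
by rewrite (leq_trans (index_le_a l)) // /gsum (big_rem l lL) leq_addr.
Qed.

Lemma gsum_inj : {in legal_seq &, injective gsum}.
Proof.
move=> L1 L2 legal1 legal2 sumE; have := gsum_ge_indices legal2; rewrite -sumE.
by move/((zeckendorf (gsum L1)).2 _ _ (gsum_ge_indices legal1)); apply.
Qed.

Lemma exists_legal_seq m : exists L, legal_seq L && (gsum L == m).
Proof.
have [L /andP [legal_L _] <-] : representable m m by apply/(zeckendorf m).1/index_le_a.
by exists L; rewrite legal_L eqxx.
Qed.

Definition zeck (m : nat) : seq nat := xchoose (exists_legal_seq m).

Definition nsummands (m : nat) : nat := size (zeck m).

Lemma zeck_legal m : legal_seq (zeck m).
Proof. by have /andP [] := xchooseP (exists_legal_seq m). Qed.

Lemma gsum_zeck m : gsum (zeck m) = m.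
Proof. by have /andP [_ /eqP] := xchooseP (exists_legal_seq m). Qed.

Lemma zeck_gsum L : legal_seq L -> zeck (gsum L) = L.
Proof. by move=> legal_L; exact: gsum_inj (zeck_legal _) legal_L (gsum_zeck _). Qed.

Lemma zeck_upto i m : m < a i.+1 -> zeck m \in legal_upto i.
Proof. by move/(zeckendorf i).1 => [L L_upto <-]; rewrite zeck_gsum //; case/andP: L_upto. Qed.

Lemma nsummands_le m : nsummands m <= m.
Proof.
rewrite /nsummands -[X in _ <= X]gsum_zeck; have := legal_seq_gt0 (zeck_legal m).
elim: (zeck m) => //= l L IHL /andP [l_gt0 L_gt0]; rewrite /gsum big_cons -/(gsum L).
by have := IHL L_gt0; have := index_le_a l; lia.
Qed.

Lemma legal_decomp_sizeE m k :
  `[< exists L, legal_decomp s b a L m /\ size L = k >] = (k == nsummands m).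
Proof.
apply/asboolP/eqP => [[L [/legal_decompE [legal_L ->] <-]]|->].
  by rewrite /nsummands zeck_gsum.
by exists (zeck m); split=> //; apply/legal_decompE; rewrite zeck_legal gsum_zeck.
Qed.

Lemma nsummands_add i m :
  0 < i -> m < a (follow_bound i).+1 -> nsummands (m + a i) = (nsummands m).+1.
Proof.
move=> i_gt0 /zeck_upto /(legal_upto_cons i_gt0) /andP [legal_iz _].
have -> : m + a i = gsum (i :: zeck m) by rewrite /gsum big_cons -/(gsum _) gsum_zeck addnC.
by rewrite /nsummands zeck_gsum.
Qed.

End LegalDecompositions.

Section GeneratingFunction.
Variables (s b : nat) (a : nat -> nat).
Hypotheses (b_gt0 : (0 < b)%N) (gen : is_generacci s b a).
Variables (R : pzSemiRingType) (y : R).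
Local Open Scope ring_scope.

Local Notation nsummands := (nsummands b_gt0 gen).
Local Notation follow_bound := (follow_bound s b).

Definition prefix_gen (i : nat) : R := \sum_(0 <= m < a i.+1) y ^+ nsummands m.

Lemma g_nE n : g_n s b a n y = \sum_(lo_end b a n <= m < hi_end b a n) y ^+ nsummands m.
Proof.
rewrite /g_n /p_nk; under eq_bigr => k _ do rewrite natr_sum mulr_suml.
rewrite exchange_big_nat /=; apply: eq_big_nat => m /andP [_ lt_m].
under eq_bigr => k _ do rewrite legal_decomp_sizeE.
rewrite (bigD1_seq (nsummands m)) ?iota_uniq //= ?eqxx ?mul1r; last first.
  by rewrite mem_iota /= subn0 (leq_ltn_trans (nsummands_le _ _ m)).
by rewrite big1 ?addr0 // => k /negbTE ->; rewrite mul0r.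
Qed.

Lemma gen_interval_succ i : (0 < i)%N ->
  \sum_(a i <= m < a i.+1) y ^+ nsummands m = y * prefix_gen (follow_bound i).
Proof.
move=> i_gt0; rewrite (a_succ b_gt0 gen i_gt0) -{1}(add0n (a i)) big_addn addKn.
rewrite mulr_sumr; apply: eq_big_nat => m /andP [_ lt_m].
by rewrite nsummands_add // exprS.
Qed.

Lemma gen_interval_bin n r : (0 < n)%N -> (r <= b)%N ->
  \sum_(a (n.-1 * b).+1 <= m < a (n.-1 * b + r).+1) y ^+ nsummands m
  = (y * prefix_gen ((n - s.+1) * b)) *+ r.
Proof.
move=> n_gt0; elim: r => [|r IHr] le_rb; first by rewrite addn0 big_geq.
have le_lo : (a (n.-1 * b).+1 <= a (n.-1 * b + r).+1)%N.
  by apply: (a_le gen); rewrite // ltnS leq_addr.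
have le_hi : (a (n.-1 * b + r).+1 <= a (n.-1 * b + r.+1).+1)%N.
  by apply: (a_le gen); rewrite // addnS.
rewrite (big_cat_nat le_lo le_hi) IHr ?(ltnW le_rb) //= addnS gen_interval_succ //.
by rewrite /follow_bound -addnS bin_of_in_bin // mulrSr.
Qed.

Lemma prefix_gen_g_n n :
  (0 < n)%N -> prefix_gen (n * b) = prefix_gen (n.-1 * b) + g_n s b a n y.
Proof.
case: n => // n _; rewrite g_nE /prefix_gen (big_cat_nat (n := a (n * b).+1)) //.
by apply: (a_le gen); rewrite // ltnS mulSn leq_addl.
Qed.

Lemma g_n_prefix n : (0 < n)%N -> g_n s b a n y = (y * prefix_gen ((n - s.+1) * b)) *+ b.
Proof.
move=> n_gt0; rewrite g_nE -gen_interval_bin //; case: n n_gt0 => //= n _.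
by rewrite addnC -mulSn.
Qed.

Lemma g_n_rec n : (0 < n)%N ->
  g_n s b a (n + s.+1) y = g_n s b a (n + s) y + b%:R * y * g_n s b a n y.
Proof.
move=> n_gt0.
rewrite (g_n_prefix (n := n + s.+1)) ?(g_n_prefix (n := n + s)) ?addn_gt0 ?n_gt0 //.
have -> : (n + s - s.+1 = n.-1)%N by lia.
by rewrite addnK prefix_gen_g_n // mulrDr mulrnDl mulr_natl mulrnAl.
Qed.

End GeneratingFunction.

Local Open Scope ring_scope.

Lemma sum_indicator (R : pzSemiRingType) (n m : nat) (f : nat -> R) :
  \sum_(j < n) (j == m :> nat)%:R * f j = if (m < n)%N then f m else 0.
Proof.
rewrite -(big_mkord xpredT (fun j => (j == m)%:R * f j)).
case: ltnP => [lt_mn|le_nm]; last first.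
  rewrite big1_seq // => j /andP [_]; rewrite mem_iota => /andP [_ lt_jn].
  have /negbTE -> : j != m by apply/eqP; lia.
  by rewrite mul0r.
rewrite (bigD1_seq m) ?mem_iota ?iota_uniq //= ?subn0 // eqxx mul1r big1 ?addr0 //.
by move=> j /negbTE ->; rewrite mul0r.
Qed.

Definition companion (R : pzRingType) (d : nat) (c : 'I_d.+1 -> R) : 'M[R]_d.+1 :=
  \matrix_(j, k) ((j == k.+1 :> nat)%:R + (k == d :> nat)%:R * c j).

Lemma map_companion (R S : pzRingType) (f : {rmorphism R -> S}) d (c : 'I_d.+1 -> R) :
  map_mx f (companion c) = companion (f \o c).
Proof. by apply/matrixP => j k; rewrite !mxE rmorphD rmorphM !rmorph_nat. Qed.

Lemma det_moment_pencil (R : comNzRingType) d (al q : 'I_d.+1 -> R) :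
  \det (\matrix_(j < d.+1, k < d.+1)
     ((\sum_i q i * al i ^+ (1 + j + k))%:P - 'X * (\sum_i al i ^+ (1 + j + k))%:P))
  = (\det (Vandermonde d.+1 (\row_i al i)) ^+ 2)%:P * \prod_i ((al i)%:P * ((q i)%:P - 'X)).
Proof.
pose V := map_mx polyC (Vandermonde d.+1 (\row_i al i)).
pose D : 'rV[{poly R}]_d.+1 := \row_i ((al i)%:P * ((q i)%:P - 'X)).
have -> : \matrix_(j < d.+1, k < d.+1)
     ((\sum_i q i * al i ^+ (1 + j + k))%:P - 'X * (\sum_i al i ^+ (1 + j + k))%:P)
     = V *m diag_mx D *m V^T.
  apply/matrixP => j k; rewrite !mxE !rmorph_sum mulr_sumr -sumrB.
  apply: eq_bigr => i _; rewrite mul_mx_diag !mxE !exprD expr1 !rmorphM /=.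
  ring.
rewrite !det_mulmx det_tr det_diag det_map_mx expr2 polyCM.
by rewrite [LHS]mulrC -mulrA; do 2!congr (_ * _); apply: eq_bigr => i _; rewrite mxE.
Qed.

Section DistinctRoots.
Variables (F : fieldType) (d : nat) (al : 'I_d.+1 -> F).
Hypothesis al_inj : injective al.

Local Notation V := (Vandermonde d.+1 (\row_i al i)).

Lemma vandermonde_unit : V \in unitmx.
Proof.
rewrite unitmxE unitfE det_Vandermonde; apply/prodf_neq0 => i _.
apply/prodf_neq0 => j lt_ij; rewrite !mxE subr_eq0; apply/eqP => /al_inj eq_ji.
by move: lt_ij; rewrite eq_ji ltnn.
Qed.

Variable c : 'I_d.+1 -> F.
Hypothesis al_root : forall i, al i ^+ d.+1 = \sum_k c k * al i ^+ k.

Lemma recurrence_solution (h : nat -> F) :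
  (forall n, h (n + d.+1)%N = \sum_k c k * h (n + k)%N) ->
  exists q : 'I_d.+1 -> F, forall n, h n = \sum_i q i * al i ^+ n.
Proof.
move=> h_rec; pose q := invmx V *m \col_(k < d.+1) h k.
exists (fun i => q i 0); elim/ltn_ind => n IHn.
case: (ltnP n d.+1) => [lt_nd|le_dn].
  have := congr1 (fun M : 'cV_d.+1 => M (Ordinal lt_nd) 0)
    (mulKVmx vandermonde_unit (\col_k h k)).
  by rewrite !mxE => <-; apply: eq_bigr => i _; rewrite !mxE mulrC.
have [m n_eq] : exists m, n = (m + d.+1)%N by exists (n - d.+1)%N; rewrite subnK.
subst n; rewrite h_rec (eq_bigr (fun k => \sum_i c k * (q i 0 * al i ^+ (m + k)))); last first.
  by move=> k _; rewrite IHn ?mulr_sumr // ltn_add2l.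
rewrite exchange_big /=; apply: eq_bigr => i _.
rewrite exprD al_root !mulr_sumr; apply: eq_bigr => k _; rewrite exprD.
ring.
Qed.

Lemma companion_diagonalized : V^T *m companion c = diag_mx (\row_i al i) *m V^T.
Proof.
apply/matrixP => i k; rewrite mul_diag_mx !mxE.
under eq_bigr => j _ do rewrite !mxE mulrDr (mulrC (al i ^+ j)) mulrCA (mulrC (al i ^+ j)).
rewrite big_split /= -mulr_sumr sum_indicator.
case: (ltngtP k d) => [lt_kd|gt_kd|eq_kd].
- by rewrite ltnS lt_kd mul0r addr0 exprS.
- by have := ltn_ord k; lia.
- by rewrite eq_kd ltnn add0r mul1r -exprS al_root.
Qed.

Lemma trace_companion_exp n : \tr (companion c ^+ n) = \sum_i al i ^+ n.
Proof.
have VT_unit : V^T \in unitmx by rewrite unitmx_tr vandermonde_unit.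
have conj_exp : V^T *m companion c ^+ n = diag_mx (\row_i al i ^+ n) *m V^T.
  elim: n => [|n IHn].
    by rewrite expr0 mulmx1 -[LHS]mul1mx; congr (_ *m _); apply/matrixP => i j; rewrite !mxE expr0.
  rewrite exprSr -mulmxE mulmxA IHn -mulmxA companion_diagonalized mulmxA mulmx_diag.
  by congr (diag_mx _ *m _); apply/matrixP => i j; rewrite !mxE exprSr.
rewrite -(mulKmx VT_unit (companion c ^+ n)) conj_exp mxtrace_mulC mulmxK // mxtrace_diag.
by apply: eq_bigr => i _; rewrite mxE.
Qed.

End DistinctRoots.

Lemma g_n_rmorph (R S : pzSemiRingType) (f : {rmorphism R -> S}) s b a n x :
  f (g_n s b a n x) = g_n s b a n (f x).
Proof.
by rewrite /g_n rmorph_sum; apply: eq_bigr => k _; rewrite rmorphM rmorph_nat rmorphXn.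
Qed.

Definition rec_coef (R : pzSemiRingType) (s : nat) (t : R) (j : 'I_s.+1) : R :=
  (j == s :> nat)%:R + (j == 0 :> nat)%:R * t.
Arguments rec_coef {R} s t j.

Lemma sum_rec_coef (R : pzSemiRingType) s (t : R) (f : nat -> R) :
  \sum_(k < s.+1) rec_coef s t k * f k = f s + t * f 0%N.
Proof.
under eq_bigr => k _ do rewrite mulrDl -mulrA.
by rewrite big_split /= sum_indicator (sum_indicator _ _ (fun i => t * f i)) ltnSn.
Qed.

Lemma rec_coef_rmorph (R S : pzSemiRingType) (f : {rmorphism R -> S}) s t :
  f \o rec_coef s t = rec_coef s (f t).
Proof. by apply/funext => j; rewrite /= rmorphD rmorphM !rmorph_nat. Qed.

Lemma charpoly_root_inv (R : rcfType) s b (y : R) x : root (charpoly s b y) x ->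
  x != 0 /\ x^-1 ^+ s.+1 = x^-1 ^+ s + ((b%:R * y)%:C)%C.
Proof.
rewrite /root /charpoly !hornerE => /eqP; set c := ((b%:R * y)%:C)%C => root_x.
have one_eq : 1 = x + c * x ^+ s.+1 by apply/eqP; rewrite -subr_eq0 opprD addrA root_x.
have x_neq0 : x != 0.
  by apply/eqP => x0; move/eqP: one_eq; rewrite x0 expr0n mulr0 addr0 oner_eq0.
have inv_exp : x^-1 ^+ s.+1 * x ^+ s.+1 = 1 by rewrite -exprMn mulVf ?expr1n.
split=> //; rewrite -[LHS]mulr1 one_eq mulrDr mulrCA inv_exp mulr1.
by rewrite exprSr -mulrA mulVf ?mulr1.
Qed.

(* det(H - Z T), where H_{jk} = g_{1+j+k}(y) and T_{jk} = tr C(y)^{1+j+k} for the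
   companion matrix C(y) of the recurrence of g; the inner variable is y. *)
Definition eliminant (R : rcfType) (s b : nat) (a : nat -> nat) : {poly {poly complex R}} :=
  \det (\matrix_(j < s.+1, k < s.+1)
    ((g_n s b a (1 + j + k) 'X)%:P
     - 'X * (\tr (companion (rec_coef s (b%:R * 'X)) ^+ (1 + j + k)))%:P)).

Section Specialization.
Variables (R : rcfType) (s b : nat) (a : nat -> nat).
Hypotheses (b_gt0 : (0 < b)%N) (gen : is_generacci s b a).
Variables (y : R) (lam : 'I_s.+1 -> complex R).
Hypotheses (lam_inj : injective lam) (lam_root : forall i, root (charpoly s b y) (lam i)).

Local Notation yC := (y%:C)%C.
Local Notation al i := (lam i)^-1.

Lemma al_neq0 i : al i != 0.
Proof. by rewrite invr_eq0; case: (charpoly_root_inv (lam_root i)). Qed.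

Lemma al_inj : injective (fun i => al i).
Proof. by move=> i j /invr_inj /lam_inj. Qed.

Lemma al_root i : al i ^+ s.+1 = \sum_k rec_coef s (b%:R * yC) k * al i ^+ k.
Proof.
rewrite sum_rec_coef expr0 mulr1; case: (charpoly_root_inv (lam_root i)) => _ ->.
by rewrite rmorphM /= rmorph_nat.
Qed.

Lemma g_n_complex n : (g_n s b a n y)%:C%C = g_n s b a n yC.
Proof. by rewrite -(g_n_rmorph (real_complex R)). Qed.

Lemma g_n_closed_form :
  exists q, forall n, (0 < n)%N -> (g_n s b a n y)%:C%C = \sum_i q i * al i ^+ n.
Proof.
pose h n := g_n s b a n.+1 yC.
have h_rec n : h (n + s.+1)%N = \sum_k rec_coef s (b%:R * yC) k * h (n + k)%N.
  by rewrite (sum_rec_coef _ _ (fun k => h (n + k)%N)) /h addn0 -!addSn g_n_rec // mulrA.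
have [r hE] := recurrence_solution al_inj al_root h_rec.
exists (fun i => r i / al i) => -[//|n] _.
rewrite g_n_complex -/(h n) hE.
by apply: eq_bigr => i _; rewrite exprSr mulrA mulrAC divfK ?al_neq0.
Qed.

Lemma eliminant_at q :
  (forall n, (0 < n)%N -> (g_n s b a n y)%:C%C = \sum_i q i * al i ^+ n) ->
  map_poly (fun c : {poly complex R} => c.[yC]) (eliminant R s b a)
  = (\det (Vandermonde s.+1 (\row_i al i)) ^+ 2)%:P * \prod_i ((al i)%:P * ((q i)%:P - 'X)).
Proof.
move=> g_nE; rewrite -(det_moment_pencil (fun i => al i)).
change (fun c : {poly complex R} => c.[yC]) with (horner_eval yC).
rewrite -det_map_mx; congr (\det _); apply/matrixP => j k; rewrite !mxE.
rewrite rmorphB rmorphM /= map_polyC map_polyX map_polyC /=.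
rewrite -trace_map_mx rmorphXn /= map_companion rec_coef_rmorph.
rewrite g_n_rmorph (trace_companion_exp al_inj) /=; last first.
  by move=> i; rewrite al_root horner_evalE hornerM hornerX -polyC_natr hornerC.
have -> : horner_eval yC 'X = yC by exact: hornerX.
by rewrite -g_n_complex g_nE.
Qed.

Lemma eliminant_specialization : exists q,
  [/\ forall n, (0 < n)%N -> (g_n s b a n y)%:C%C = \sum_i q i * al i ^+ n,
      map_poly (fun c : {poly complex R} => c.[yC]) (eliminant R s b a) != 0
    & forall i, (map_poly (fun c : {poly complex R} => c.[yC]) (eliminant R s b a)).[q i] = 0].
Proof.
have [q g_nE] := g_n_closed_form; exists q; rewrite (eliminant_at g_nE); split=> //.
  rewrite mulf_neq0 ?polyC_eq0 ?expf_neq0 -?unitfE -?unitmxE ?(vandermonde_unit al_inj) //.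
  apply/prodf_neq0 => i _; rewrite mulf_neq0 ?polyC_eq0 ?al_neq0 //.
  by rewrite -opprB oppr_eq0 polyXsubC_eq0.
move=> i; apply/eqP; rewrite hornerM horner_prod mulf_eq0 prodf_seq_eq0; apply/orP; right.
apply/hasP; exists i; first exact: mem_index_enum.
by rewrite hornerM hornerD hornerN !hornerC hornerX subrr mulr0 eqxx.
Qed.

End Specialization.

Theorem proposition2p16 (R : realType) (s b : nat) (a : nat -> nat) :
  (1 <= s)%N -> (1 <= b)%N -> is_generacci s b a ->
  exists P : {poly {poly complex R}}, P != 0 /\
  forall y : R, 0 < y ->
  forall lam : 'I_s.+1 -> complex R,
    injective lam ->
    (forall i, root (charpoly s b y) (lam i)) ->
    (forall z, root (charpoly s b y) z -> exists i, z = lam i) ->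
  exists (q : 'I_s.+1 -> complex R) (N : nat),
    (forall i, (map_poly (fun c : {poly complex R} => c.[y%:C%C]) P).[q i] = 0) /\
    forall n, (N <= n)%N ->
      (g_n s b a n y)%:C%C = \sum_(i < s.+1) q i * ((lam i)^-1) ^+ n.
Proof.
move=> _ b_gt0 gen.
(* If the eliminant vanishes, no y admits distinct roots, and the claim is vacuous. *)
have [elim0|elim_neq0] := eqVneq (eliminant R s b a) 0.
  exists 1; split=> [|y _ lam lam_inj lam_root _]; first exact: oner_neq0.
  have [q [_ + _]] := eliminant_specialization b_gt0 gen lam_inj lam_root.
  by rewrite elim0 => /eqP[]; exact: map_poly0.
exists (eliminant R s b a); split=> // y _ lam lam_inj lam_root _.
have [q [g_nE _ q_root]] := eliminant_specialization b_gt0 gen lam_inj lam_root.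
by exists q, 1%N; split.
Qed.
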